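(* In the standing setup with $A$ generic, for $i=1,2,3$ and all $x\in\mathbb R^6$: $\nabla p_0(x)=B_i\nabla q_i(x)$, where $p_0(x)=\tfrac18\operatorname{tr}(f_0'(x))^2$ and $q_i(x)=\tfrac18\operatorname{tr}(B_i^{\rm T}(f_0'(x))^2)$.
   Context: Standing setup: $J=\begin{pmatrix}0&I_3\\-I_3&0\end{pmatrix}$ ($6\times6$). $A$ is a fixed real $6\times 6$ skew-Hamiltonian matrix ($A^{\rm T}J=JA$). $H_0$ is a homogeneous cubic polynomial on $\mathbb R^6$ with $A\nabla^2H_0(x)=\nabla^2H_0(x)A^{\rm T}$ for all $x$ ($\nabla^2$ = Hesse matrix), $f_0=J\nabla H_0$, and $f_0'$ is its Jacobi matrix. Genericity: the characteristic polynomial of $A$ (a square of a cubic) has three pairwise distinct roots $\lambda_1,\lambda_2,\lambda_3$, each a double eigenvalue. $B_i=\alpha_iI+\beta_iA+\gamma_iA^2$ ($i=1,2,3$), where $\alpha_i+\beta_i\lambda+\gamma_i\lambda^2$ is the unique polynomial of degree $\le2$ equal to $-1$ at $\lambda_i$ and to $1$ at the other two eigenvalues; $B_i^2=I$. *)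

From HB Require Import structures.
From mathcomp Require Import all_boot all_order all_algebra.
Set Implicit Arguments. Unset Strict Implicit. Unset Printing Implicit Defensive.
Import Order.TTheory GRing.Theory Num.Theory.
Local Open Scope ring_scope.

Section Defs.
Variable C : numClosedFieldType.

Definition Jmat : 'M[C]_6 :=
  \matrix_(i, j) (if (j : nat) == (i : nat) + 3 then 1
                  else if (i : nat) == (j : nat) + 3 then -1 else 0).

(* x is a point of R^6 (all coordinates real) *)
Definition real_vec (x : 'cV[C]_6) : Prop := forall k, x k 0 \is Num.real.

Definition skew_hamiltonian (A : 'M[C]_6) : Prop := A^T *m Jmat = Jmat *m A.

Definition homogeneous_cubic (H : 'cV[C]_6 -> C) : Prop :=
  exists c : 'I_6 -> 'I_6 -> 'I_6 -> C,
    (forall i j k, c i j k \is Num.real) /\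
    forall x, real_vec x ->
      H x = \sum_(i < 6) \sum_(j < 6) \sum_(k < 6) c i j k * x i 0 * x j 0 * x k 0.

(* d is the partial derivative of f at the point x in coordinate direction k:
   along the real line t |-> x + t e_k, f is a polynomial function p(t)
   and d = p'(0).  (All functions considered here are polynomial.) *)
Definition has_partial (f : 'cV[C]_6 -> C) (x : 'cV[C]_6) (k : 'I_6) (d : C) : Prop :=
  exists p : {poly C},
    (forall t, t \is Num.real -> f (x + t *: delta_mx k 0) = p.[t]) /\ p`_1 = d.

Definition Bmat (A : 'M[C]_6) (al be ga : C) : 'M[C]_6 :=
  al *: 1%:M + be *: A + ga *: (A *m A).

Definition p0fun (df0 : 'cV[C]_6 -> 'M[C]_6) (x : 'cV[C]_6) : C :=
  8^-1 * \tr (df0 x *m df0 x).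

Definition qfun (B : 'M[C]_6) (df0 : 'cV[C]_6 -> 'M[C]_6) (x : 'cV[C]_6) : C :=
  8^-1 * \tr (B^T *m (df0 x *m df0 x)).

End Defs.
Arguments Jmat {C}.

From HB Require Import structures.
From mathcomp Require Import all_boot all_order all_algebra.
From mathcomp Require Import ring.
Import Order.TTheory GRing.Theory Num.Theory.
Local Open Scope ring_scope.
Set Implicit Arguments. Unset Strict Implicit. Unset Printing Implicit Defensive.

(* Since H_0 is cubic, its Hessian is linear, h(x) = sum_r x_r S_r with a totally symmetric
   family S_r, and f_0' = J h.  Differentiating the traces gives
   grad p_0 = 1/4 (tr (J h J S_k))_k and grad q_i = 1/4 (tr (B_i^T J h J S_k))_k, where the two
   terms of the product rule agree because B_i, like A, is skew-Hamiltonian.  The relation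
   A h = h A^T for all x gives A S_r = S_r A^T, hence B_i S_r = S_r B_i^T, which moves B_i
   through the column of traces: B_i grad q_i = 1/4 (tr (B_i^T B_i^T J h J S_k))_k.  Finally
   B_i^2 = I: a skew-Hamiltonian 6x6 matrix is annihilated by a cubic (the Pfaffian of
   lambda J - J A), so its minimal polynomial is prod_j (X - lambda_j), and the polynomial
   defining B_i squares to 1 at each lambda_j. *)

Lemma sum_natr_eq_mul (R : pzSemiRingType) (I : finType) (F : I -> R) (j : I) :
  \sum_i (i == j)%:R * F i = F j.
Proof.
rewrite (bigD1 j) //= eqxx mul1r big1 ?addr0 // => i /negPf ->.
by rewrite mul0r.
Qed.

Lemma sum_delta_mx_scale (R : pzRingType) (V : lmodType R) n (F : 'I_n -> V) r :
  \sum_m (delta_mx r 0 : 'cV[R]_n) m 0 *: F m = F r.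
Proof.
rewrite (bigD1 r) //= mxE !eqxx scale1r big1 ?addr0 // => m /negPf mr.
by rewrite mxE mr scale0r.
Qed.

Lemma inordE n k (ltkn : (k < n.+1)%N) : inord k = Ordinal ltkn.
Proof. by apply/val_inj; rewrite /= inordK. Qed.

Local Notation ord6 k := (@Ordinal 6 k isT).

Lemma sum6 (R : nmodType) (F : 'I_6 -> R) :
  \sum_(i < 6) F i
  = F (ord6 0) + F (ord6 1) + F (ord6 2) + F (ord6 3) + F (ord6 4) + F (ord6 5).
Proof.
rewrite !big_ord_recl big_ord0 addr0 !addrA.
by congr (_ + _ + _ + _ + _ + _); congr F; apply/val_inj.
Qed.

Lemma ord6P (P : 'I_6 -> Prop) :
  P (ord6 0) -> P (ord6 1) -> P (ord6 2) -> P (ord6 3) -> P (ord6 4) -> P (ord6 5) ->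
  forall i, P i.
Proof.
by move=> ? ? ? ? ? ? [[|[|[|[|[|[|i]]]]]] lti] //; rewrite (bool_irrelevance lti isT).
Qed.

Section PartialDerivatives.
Variable C : numClosedFieldType.
Implicit Types (f g : 'cV[C]_6 -> C) (x y : 'cV[C]_6) (k l : 'I_6).

Lemma real_vec_line x k t :
  real_vec x -> t \is Num.real -> real_vec (x + t *: delta_mx k 0).
Proof. by move=> xR tR i; rewrite !mxE realD ?realM ?realn. Qed.

Lemma has_partial_unique f x k d1 d2 :
  has_partial f x k d1 -> has_partial f x k d2 -> d1 = d2.
Proof.
case=> [p [fp <-]] [q [fq <-]]; suff -> : p = q by [].
apply/eqP; rewrite -subr_eq0; apply/eqP.
apply: (@roots_geq_poly_eq0 _ _ [seq i%:R | i <- iota 0 (size (p - q))]).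
- apply/allP => _ /mapP [i _ ->].
  by rewrite /root hornerD hornerN -fp ?realn // -fq ?realn // subrr.
- by rewrite map_inj_uniq ?iota_uniq // => i j /eqP; rewrite eqr_nat => /eqP.
- by rewrite size_map size_iota.
Qed.

Lemma eq_has_partial f g x k d :
  f =1 g -> has_partial g x k d -> has_partial f x k d.
Proof. by move=> fg [p [gp dp]]; exists p; split=> // t tR; rewrite fg gp. Qed.

Lemma eq_has_partial_real f g x k d :
  (forall y, real_vec y -> f y = g y) -> real_vec x ->
  has_partial g x k d -> has_partial f x k d.
Proof.
move=> fg xR [p [gp dp]]; exists p; split=> // t tR.
by rewrite fg ?gp //; apply: real_vec_line.
Qed.

Lemma has_partial_eqd f x k d1 d2 :
  d1 = d2 -> has_partial f x k d1 -> has_partial f x k d2.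
Proof. by move->. Qed.

Lemma has_partial_cst (c : C) x k : has_partial (fun=> c) x k 0.
Proof. by exists c%:P; split=> [t _|]; rewrite ?hornerC ?coefC. Qed.

Lemma has_partial_coord a x k : has_partial (fun y => y a 0) x k (a == k)%:R.
Proof.
exists ((x a 0)%:P + (a == k)%:R *: 'X); split=> [t _|].
  by rewrite !mxE hornerD hornerC hornerZ hornerX andbT mulrC.
by rewrite coefD coefC coefZ coefX mulr1 add0r.
Qed.

Lemma has_partialM f g x k d1 d2 :
  has_partial f x k d1 -> has_partial g x k d2 ->
  has_partial (fun y => f y * g y) x k (d1 * g x + f x * d2).
Proof.
case=> [p [fp <-]] [q [gq <-]]; exists (p * q); split=> [t tR|].
  by rewrite hornerM fp ?gq.
have value0 r h : (forall t, t \is Num.real -> h (x + t *: delta_mx k 0) = r.[t]) ->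
    r`_0 = h x.
  by move=> hr; rewrite -horner_coef0 -hr ?real0 // scale0r addr0.
by rewrite coefM !big_ord_recr big_ord0 /= add0r (value0 _ _ fp) (value0 _ _ gq) addrC.
Qed.

Lemma has_partial_sum (I : Type) (r : seq I) (F : I -> 'cV[C]_6 -> C) (D : I -> C) x k :
  (forall i, has_partial (F i) x k (D i)) ->
  has_partial (fun y => \sum_(i <- r) F i y) x k (\sum_(i <- r) D i).
Proof.
move=> FD; elim: r => [|i r [p [Fp pd]]].
  by exists 0; split=> [t _|]; rewrite ?big_nil ?horner0 ?coef0.
have [q [Fq qd]] := FD i; exists (q + p); split=> [t tR|].
  by rewrite big_cons hornerD Fq ?Fp.
by rewrite big_cons coefD qd pd.
Qed.

Lemma has_partial_coordM a g x l d : has_partial g x l d ->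
  has_partial (fun y => y a 0 * g y) x l ((a == l)%:R * g x + x a 0 * d).
Proof. exact: has_partialM (has_partial_coord a x l). Qed.

Lemma has_partial_lin (u : 'I_6 -> C) x l :
  has_partial (fun y => \sum_r y r 0 * u r) x l (u l).
Proof.
apply: has_partial_eqd
  (has_partial_sum _ (fun r => has_partial_coordM r (has_partial_cst (u r) x l))).
by under eq_bigr do rewrite mulr0 addr0; rewrite sum_natr_eq_mul.
Qed.

Lemma has_partial_quad (w : 'I_6 -> 'I_6 -> C) x l :
  has_partial (fun y => \sum_a \sum_b w a b * y a 0 * y b 0) x l
    (\sum_r (w l r + w r l) * x r 0).
Proof.
apply: (@eq_has_partial _ (fun y => \sum_a y a 0 * \sum_b y b 0 * w a b)).
  by move=> y; apply: eq_bigr => a _; rewrite mulr_sumr; apply: eq_bigr => b _; ring.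
apply: has_partial_eqd
  (has_partial_sum _ (fun a => has_partial_coordM a (has_partial_lin (w a) x l))).
rewrite big_split /= sum_natr_eq_mul -big_split /=.
by apply: eq_bigr => r _; ring.
Qed.

Lemma has_partial_cubic (c : 'I_6 -> 'I_6 -> 'I_6 -> C) x l :
  has_partial (fun y => \sum_i \sum_j \sum_k c i j k * y i 0 * y j 0 * y k 0) x l
    (\sum_a \sum_b (c l a b + c a l b + c a b l) * x a 0 * x b 0).
Proof.
apply: (@eq_has_partial _ (fun y => \sum_i y i 0 * \sum_j \sum_k c i j k * y j 0 * y k 0)).
  move=> y; apply: eq_bigr => i _; rewrite mulr_sumr; apply: eq_bigr => j _.
  by rewrite mulr_sumr; apply: eq_bigr => k _; ring.
apply: has_partial_eqd
  (has_partial_sum _ (fun i => has_partial_coordM i (has_partial_quad (c i) x l))).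
rewrite big_split /= sum_natr_eq_mul -big_split /=; apply: eq_bigr => a _.
rewrite mulr_sumr -big_split /=; apply: eq_bigr => b _; ring.
Qed.

End PartialDerivatives.

Section MatrixPartialDerivatives.
Variable C : numClosedFieldType.
Implicit Types (x : 'cV[C]_6) (k : 'I_6).

Definition has_partial_mx m n (F : 'cV[C]_6 -> 'M[C]_(m, n)) x k (D : 'M[C]_(m, n)) :=
  forall a b, has_partial (fun y => F y a b) x k (D a b).

Lemma has_partial_mx_cst m n (M : 'M[C]_(m, n)) x k : has_partial_mx (fun=> M) x k 0.
Proof. by move=> a b; rewrite mxE; apply: has_partial_cst. Qed.

Lemma has_partial_mx_lin m n (M : 'I_6 -> 'M[C]_(m, n)) x k :
  has_partial_mx (fun y => \sum_r y r 0 *: M r) x k (M k).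
Proof.
move=> a b; apply: (@eq_has_partial _ _ (fun y => \sum_r y r 0 * M r a b)).
  by move=> y; rewrite summxE; apply: eq_bigr => r _; rewrite mxE.
exact: has_partial_lin.
Qed.

Lemma has_partial_mxM m n p (F : 'cV[C]_6 -> 'M[C]_(m, n)) (G : 'cV[C]_6 -> 'M[C]_(n, p))
    x k D E :
  has_partial_mx F x k D -> has_partial_mx G x k E ->
  has_partial_mx (fun y => F y *m G y) x k (D *m G x + F x *m E).
Proof.
move=> FD GE a b; apply: (@eq_has_partial _ _ (fun y => \sum_j F y a j * G y j b)).
  by move=> y; rewrite mxE.
apply: has_partial_eqd (has_partial_sum _ (fun j => has_partialM (FD a j) (GE j b))).
by rewrite !mxE -big_split.
Qed.

Lemma has_partial_mxtrace n (F : 'cV[C]_6 -> 'M[C]_n) x k D :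
  has_partial_mx F x k D -> has_partial (fun y => \tr (F y)) x k (\tr D).
Proof. by move=> FD; apply: has_partial_sum => a; apply: FD. Qed.

Lemma has_partial_qfun (P : 'M[C]_6) (D : 'cV[C]_6 -> 'M[C]_6) x k dD :
  has_partial_mx D x k dD ->
  has_partial (qfun P D) x k (8^-1 * \tr (P^T *m (dD *m D x + D x *m dD))).
Proof.
move=> DdD.
have PDD := has_partial_mxM (has_partial_mx_cst P^T x k) (has_partial_mxM DdD DdD).
apply: has_partial_eqd (has_partialM (has_partial_cst 8^-1 x k) (has_partial_mxtrace PDD)).
by rewrite mul0r add0r mul0mx add0r.
Qed.

End MatrixPartialDerivatives.

Section CubicHamiltonian.
Variable C : numClosedFieldType.
Implicit Types (c : 'I_6 -> 'I_6 -> 'I_6 -> C).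

Definition sym3 c i j k := c i j k + c i k j + c j i k + c j k i + c k i j + c k j i.

Definition hess_slice c r : 'M[C]_6 := \matrix_(k, l) sym3 c r k l.

Lemma trmx_hess_slice c r : (hess_slice c r)^T = hess_slice c r.
Proof. by apply/matrixP => k l; rewrite !mxE /sym3; ring. Qed.

Lemma hess_sliceC c r k l : hess_slice c r k l = hess_slice c k r l.
Proof. by rewrite !mxE /sym3; ring. Qed.

Variables (c : 'I_6 -> 'I_6 -> 'I_6 -> C) (H0 : 'cV[C]_6 -> C).
Variables (gradH : 'cV[C]_6 -> 'cV[C]_6) (hessH : 'cV[C]_6 -> 'M[C]_6).
Hypothesis H0E : forall y, real_vec y ->
  H0 y = \sum_i \sum_j \sum_k c i j k * y i 0 * y j 0 * y k 0.
Hypothesis gradHP : forall y, real_vec y -> forall k, has_partial H0 y k (gradH y k 0).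
Hypothesis hessHP : forall y, real_vec y -> forall k l,
  has_partial (fun z => gradH z k 0) y l (hessH y k l).

Lemma gradH_cubicE y k : real_vec y ->
  gradH y k 0 = \sum_a \sum_b (c k a b + c a k b + c a b k) * y a 0 * y b 0.
Proof.
move=> yR; apply: has_partial_unique (gradHP yR k) _.
exact: eq_has_partial_real H0E yR (has_partial_cubic c y k).
Qed.

Lemma hessH_cubicE y : real_vec y -> hessH y = \sum_r y r 0 *: hess_slice c r.
Proof.
move=> yR; apply/matrixP => k l; rewrite summxE.
have := has_partial_quad (fun a b => c k a b + c a k b + c a b k) y l.
move/(eq_has_partial_real (fun z zR => gradH_cubicE k zR) yR).
move/(has_partial_unique (hessHP yR k l)) ->.
by apply: eq_bigr => r _; rewrite !mxE /sym3; ring.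
Qed.

Lemma jacobian_hessE (df0 : 'cV[C]_6 -> 'M[C]_6) y :
  (forall k l, has_partial (fun z => (Jmat *m gradH z) k 0) y l (df0 y k l)) ->
  real_vec y -> df0 y = Jmat *m hessH y.
Proof.
move=> df0P yR; apply/matrixP => k l.
have gradP : has_partial_mx gradH y l (col l (hessH y)).
  by move=> a b; rewrite (ord1 b) mxE; apply: hessHP.
have := has_partial_mxM (has_partial_mx_cst Jmat y l) gradP k 0.
by rewrite mul0mx add0r colE mulmxA -colE mxE => /(has_partial_unique (df0P k l)).
Qed.

End CubicHamiltonian.

Section SymplecticAlgebra.
Variable C : numClosedFieldType.
Implicit Types (A P h S : 'M[C]_6) (al be ga : C).

Lemma trmx_Jmat : Jmat^T = - Jmat :> 'M[C]_6.
Proof.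
by apply/matrixP; apply: ord6P; apply: ord6P; rewrite !mxE /= ?oppr0 ?opprK.
Qed.

Lemma mulmxJ (M : 'M[C]_6) i j :
  (M *m Jmat) i j = if (j < 3)%N then - M i (inord (j + 3)) else M i (inord (j - 3)).
Proof.
move: j; apply: ord6P; rewrite mxE sum6 !mxE /= ?(@inordE 5 3 isT) ?(@inordE 5 4 isT)
  ?(@inordE 5 5 isT) ?(@inordE 5 0 isT) ?(@inordE 5 1 isT) ?(@inordE 5 2 isT); ring.
Qed.

Lemma mulJJ : Jmat *m Jmat = -1%:M :> 'M[C]_6.
Proof.
by apply/matrixP; apply: ord6P; apply: ord6P; rewrite mulmxJ !mxE /= ?(@inordE 5 3 isT)
  ?(@inordE 5 4 isT) ?(@inordE 5 5 isT) ?(@inordE 5 0 isT) ?(@inordE 5 1 isT)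
  ?(@inordE 5 2 isT) /= ?oppr0 ?opprK.
Qed.

Lemma trmx_Bmat A al be ga : (Bmat A al be ga)^T = Bmat A^T al be ga.
Proof. by rewrite /Bmat !linearD /= !linearZ /= trmx1 trmx_mul. Qed.

Lemma Bmat_intertwine X Y M al be ga :
  X *m M = M *m Y -> Bmat X al be ga *m M = M *m Bmat Y al be ga.
Proof.
move=> XY; rewrite /Bmat !mulmxDl !mulmxDr -!scalemxAl -!scalemxAr mul1mx mulmx1.
by rewrite XY -mulmxA XY !mulmxA XY.
Qed.

Lemma skew_hamiltonian_Bmat A al be ga :
  skew_hamiltonian A -> skew_hamiltonian (Bmat A al be ga).
Proof. by move=> AH; rewrite /skew_hamiltonian trmx_Bmat; apply: Bmat_intertwine. Qed.

Lemma skew_hamiltonian1 : skew_hamiltonian (1%:M : 'M[C]_6).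
Proof. by rewrite /skew_hamiltonian trmx1 mul1mx mulmx1. Qed.

Lemma mxtrace_skew_hamiltonian_sym P h S :
  skew_hamiltonian P -> h^T = h -> S^T = S ->
  \tr (P^T *m (Jmat *m S *m (Jmat *m h) + Jmat *m h *m (Jmat *m S)))
  = 2 * \tr (P^T *m Jmat *m h *m Jmat *m S).
Proof.
move=> PH hT ST; rewrite mulmxDr mxtraceD mulr_natl mulr2n; congr (_ + _); last by rewrite !mulmxA.
rewrite -mxtrace_tr !trmx_mul trmxK hT ST trmx_Jmat !mulmxN !mulNmx opprK.
by rewrite PH -!mulmxA; do 3 rewrite mxtrace_mulC -!mulmxA.
Qed.

End SymplecticAlgebra.

Section SkewHamiltonianCubic.
Variable C : numClosedFieldType.
Implicit Types (A X : 'M[C]_6).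

Definition sp_adj X : 'M[C]_6 := Jmat^T *m X^T *m Jmat.

Lemma sp_adj_skew_hamiltonian A : skew_hamiltonian A -> sp_adj A = A.
Proof.
by move=> AH; rewrite /sp_adj -mulmxA AH mulmxA trmx_Jmat mulNmx mulJJ opprK mul1mx.
Qed.

Lemma sp_adjZ a X : sp_adj (a *: X) = a *: sp_adj X.
Proof. by rewrite /sp_adj linearZ /= -scalemxAr -scalemxAl. Qed.

(* The entries of X + sp_adj X, with X read through the nat-indexed function x so that the
   index arithmetic computes when the entries are enumerated. *)
Definition sp_sym_entry (x : nat -> nat -> C) (i j : 'I_6) : C :=
  x i j +
  if (i < 3)%N then
    if (j < 3)%N then x (j + 3)%N (i + 3)%N else - x (j - 3)%N (i + 3)%N
  else
    if (j < 3)%N then - x (j + 3)%N (i - 3)%N else x (j - 3)%N (i - 3)%N.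

Definition sp_sym (x : nat -> nat -> C) : 'M[C]_6 := \matrix_(i, j) sp_sym_entry x i j.

Lemma addmx_sp_adjE X : X + sp_adj X = sp_sym (fun a b => X (inord a) (inord b)).
Proof.
apply/matrixP => i j; rewrite /sp_adj -trmx_mul [LHS]mxE mulmxJ [RHS]mxE.
rewrite /sp_sym_entry !inord_val.
by case: ifP => _; rewrite mxE mulmxJ; case: ifP => _; rewrite ?opprK.
Qed.

(* 48 times the monic cubic whose roots are the eigenvalues of A counted once: its coefficients
   are the elementary symmetric functions obtained by Newton's identities from the power sums
   tr (A ^+ k) / 2. *)
Definition pf_cubic A : {poly C} :=
  48 *: 'X^3 - (24 * \tr A) *: 'X^2 + (6 * (\tr A ^+ 2 - 2 * \tr (A ^+ 2))) *: 'X
  - (\tr A ^+ 3 - 6 * \tr A * \tr (A ^+ 2) + 8 * \tr (A ^+ 3))%:P.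

Lemma pf_cubic_neq0 A : pf_cubic A != 0.
Proof.
apply/eqP => /(congr1 (fun p : {poly C} => p`_3)).
by rewrite !coefE /= !mulr0 !subr0 addr0 mulr1 => /eqP; rewrite pnatr_eq0.
Qed.

Lemma size_pf_cubic A : (size (pf_cubic A) <= 4)%N.
Proof.
by apply/leq_sizeP => -[|[|[|[|j]]]] // _; rewrite !coefE /= !mulr0 !(subr0, addr0).
Qed.

Lemma horner_pf_cubic A : horner_mx A (pf_cubic A) =
  48 *: A ^+ 3 - (24 * \tr A) *: A ^+ 2 + (6 * (\tr A ^+ 2 - 2 * \tr (A ^+ 2))) *: A
  - (\tr A ^+ 3 - 6 * \tr A * \tr (A ^+ 2) + 8 * \tr (A ^+ 3))%:M.
Proof.
by rewrite rmorphB rmorphD rmorphB /= horner_mx_C !linearZ /= !rmorphXn /= horner_mx_X.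
Qed.

Lemma horner_pf_cubic_sp_sym x : horner_mx (sp_sym x) (pf_cubic (sp_sym x)) = 0.
Proof.
rewrite horner_pf_cubic !exprS expr0 !mulr1 -!mulmxE.
apply/matrixP => i j; rewrite /sp_sym /mxtrace.
repeat first [rewrite !sum6 | rewrite !mxE].
by move: i j; apply: ord6P; apply: ord6P; rewrite /sp_sym_entry /=; ring.
Qed.

(* A skew-Hamiltonian matrix is fixed by sp_adj, hence of the form X + sp_adj X. *)
Lemma skew_hamiltonian_pf_cubic A : skew_hamiltonian A -> horner_mx A (pf_cubic A) = 0.
Proof.
move=> AH; suff -> : A = 2^-1 *: A + sp_adj (2^-1 *: A).
  by rewrite addmx_sp_adjE; apply: horner_pf_cubic_sp_sym.
rewrite sp_adjZ sp_adj_skew_hamiltonian // -scalerDl -mulr2n.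
by rewrite -[_ *+ 2]mulr_natl mulfV ?pnatr_eq0 // scale1r.
Qed.

End SkewHamiltonianCubic.

Section TraceColumn.
Variables (R : comPzRingType) (n : nat) (S : 'I_n -> 'M[R]_n).

Definition trace_col (M : 'M[R]_n) : 'cV[R]_n := \col_k \tr (M *m S k).

Lemma mulmx_trace_col P M :
  (forall k a b, S k a b = S a k b) -> (forall r, P *m S r = S r *m P^T) ->
  P *m trace_col M = trace_col (P^T *m M).
Proof.
move=> SC PS; apply/matrixP => j b; rewrite !mxE.
have PSj : \sum_k P j k *: S k = S j *m P^T.
  apply/matrixP => a c; rewrite summxE; transitivity ((P *m S a) j c).
    by rewrite mxE; apply: eq_bigr => k _; rewrite !mxE SC.
  by rewrite PS !mxE; apply: eq_bigr => m _; rewrite !mxE SC.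
transitivity (\tr (M *m \sum_k P j k *: S k)).
  rewrite mulmx_sumr raddf_sum; apply: eq_bigr => k _ /=.
  by rewrite mxE -scalemxAr mxtraceZ.
by rewrite PSj mulmxA mxtrace_mulC mulmxA.
Qed.

End TraceColumn.

Lemma horner_mx_eq0_on_eigenvalues (F : fieldType) n (A : 'M[F]_n.+1) (Q p : {poly F})
    (s : seq F) :
  Q != 0 -> horner_mx A Q = 0 -> (size Q <= (size s).+1)%N -> uniq s ->
  all (eigenvalue A) s -> all (root p) s -> horner_mx A p = 0.
Proof.
move=> Qn0 AQ sizeQ s_uniq s_eigen s_root.
have s_roots : uniq_roots s by rewrite uniq_rootsE.
have dvd_min : \prod_(z <- s) ('X - z%:P) %| mxminpoly A.
  apply: uniq_roots_dvdp s_roots; apply/allP => z /(allP s_eigen).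
  by rewrite eigenvalue_root_min.
have min_eqp : \prod_(z <- s) ('X - z%:P) %= mxminpoly A.
  rewrite -dvdp_size_eqp // eqn_leq (dvdp_leq (monic_neq0 (mxminpoly_monic A)) dvd_min).
  rewrite (size_prod_XsubC _ (fun z => z)).
  exact: leq_trans (dvdp_leq Qn0 (mxminpoly_min AQ)) sizeQ.
by apply/eqP; rewrite -dvd_mxminpoly -(eqp_dvdl _ min_eqp) uniq_roots_dvdp.
Qed.

Section Involution.
Variable C : numClosedFieldType.

Lemma Bmat_horner (A : 'M[C]_6) al be ga :
  Bmat A al be ga = horner_mx A (al%:P + be *: 'X + ga *: 'X^2).
Proof.
rewrite !rmorphD /= horner_mx_C !linearZ /= rmorphXn /= horner_mx_X.
by rewrite /Bmat scalemx1 expr2 mulmxE.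
Qed.

Lemma sqr_Bmat (A : 'M[C]_6) (lam : 'I_3 -> C) al be ga :
  skew_hamiltonian A -> injective lam -> (forall j, eigenvalue A (lam j)) ->
  (forall j, (al + be * lam j + ga * lam j ^+ 2) ^+ 2 = 1) ->
  Bmat A al be ga *m Bmat A al be ga = 1%:M.
Proof.
move=> AH lam_inj lam_eigen lamB; rewrite Bmat_horner mulmxE -rmorphM /=.
apply/eqP; rewrite -subr_eq0 -(horner_mx_C A 1) -rmorphB; apply/eqP.
apply: (horner_mx_eq0_on_eigenvalues (s := [seq lam j | j <- enum 'I_3])
  (pf_cubic_neq0 A) (skew_hamiltonian_pf_cubic AH)).
- by rewrite size_map size_enum_ord; apply: size_pf_cubic.
- by rewrite map_inj_uniq ?enum_uniq.
- by apply/allP => _ /mapP [j _ ->].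
- apply/allP => _ /mapP [j _ ->].
  rewrite /root !(hornerD, hornerN, hornerM, hornerC, hornerZ, hornerX, hornerXn).
  by rewrite -expr2 lamB subrr.
Qed.

End Involution.

Section TraceGradient.
Variable C : numClosedFieldType.
Variables (S : 'I_6 -> 'M[C]_6) (D : 'cV[C]_6 -> 'M[C]_6).
Hypothesis S_sym : forall r, (S r)^T = S r.
Hypothesis DE : forall y, real_vec y -> D y = Jmat *m \sum_r y r 0 *: S r.

Lemma qfun_gradE P x (g : 'cV[C]_6) :
  skew_hamiltonian P -> real_vec x -> (forall k, has_partial (qfun P D) x k (g k 0)) ->
  g = 4^-1 *: trace_col S (P^T *m Jmat *m (\sum_r x r 0 *: S r) *m Jmat).
Proof.
move=> PH xR gP; set h := \sum_r _.
have hT : h^T = h.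
  by rewrite /h raddf_sum; apply: eq_bigr => r _; rewrite /= linearZ /= S_sym.
have DdD k : has_partial_mx D x k (Jmat *m S k).
  move=> a b; have := has_partial_mx_lin (fun r => Jmat *m S r) x k a b.
  apply: eq_has_partial_real xR.
  move=> y yR; rewrite DE // mulmx_sumr !summxE; apply: eq_bigr => r _.
  by rewrite scalemxAr.
apply/matrixP => k b; rewrite (ord1 b) !mxE.
rewrite (has_partial_unique (gP k) (has_partial_qfun P (DdD k))) DE //.
rewrite mxtrace_skew_hamiltonian_sym // mulrA.
by congr (_ * _); field.
Qed.

End TraceGradient.

Lemma qfun1 (C : numClosedFieldType) (df0 : 'cV[C]_6 -> 'M[C]_6) :
  qfun 1%:M df0 =1 p0fun df0.
Proof. by move=> y; rewrite /p0fun /qfun trmx1 mul1mx. Qed.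

Theorem mainTheorem14 (C : numClosedFieldType) (A : 'M[C]_6) (H0 : 'cV[C]_6 -> C)
    (lam al be ga : 'I_3 -> C)
    (gradH : 'cV[C]_6 -> 'cV[C]_6) (hessH df0 : 'cV[C]_6 -> 'M[C]_6)
    (gp : 'cV[C]_6 -> 'cV[C]_6) (gq : 'I_3 -> 'cV[C]_6 -> 'cV[C]_6) :
  (* standing setup *)
  A \is a mxOver Num.real ->
  skew_hamiltonian A ->
  homogeneous_cubic H0 ->
  (* gradH = grad H0, hessH = Hesse matrix of H0, df0 = Jacobian of f0 = J grad H0 *)
  (forall x, real_vec x -> forall k, has_partial H0 x k (gradH x k 0)) ->
  (forall x, real_vec x -> forall k l,
      has_partial (fun y => gradH y k 0) x l (hessH x k l)) ->
  (forall x, real_vec x -> forall k l,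
      has_partial (fun y => (Jmat *m gradH y) k 0) x l (df0 x k l)) ->
  (forall x, real_vec x -> A *m hessH x = hessH x *m A^T) ->
  (* genericity *)
  injective lam ->
  char_poly A = \prod_(j < 3) ('X - (lam j)%:P) ^+ 2 ->
  (* interpolation coefficients of B_i *)
  (forall i j, al i + be i * lam j + ga i * lam j ^+ 2 = if i == j then -1 else 1) ->
  (* gp = grad p0, gq i = grad q_i *)
  (forall x, real_vec x -> forall k, has_partial (p0fun df0) x k (gp x k 0)) ->
  (forall i x, real_vec x -> forall k,
      has_partial (qfun (Bmat A (al i) (be i) (ga i)) df0) x k (gq i x k 0)) ->
  forall i x, real_vec x -> gp x = Bmat A (al i) (be i) (ga i) *m gq i x.
Proof.
move=> _ AH [c [_ H0E]] gradHP hessHP df0P AhessH lam_inj charA BE gpP gqP i x xR.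
set B := Bmat A (al i) (be i) (ga i); pose S := hess_slice c.
have hessE := hessH_cubicE H0E gradHP hessHP.
have DE y : real_vec y -> df0 y = Jmat *m \sum_r y r 0 *: S r.
  by move=> yR; rewrite (jacobian_hessE hessHP (df0P y yR) yR) hessE.
have gradE P (g : 'cV[C]_6) : skew_hamiltonian P ->
    (forall k, has_partial (qfun P df0) x k (g k 0)) ->
    g = 4^-1 *: trace_col S (P^T *m Jmat *m hessH x *m Jmat).
  by move=> PH gP; rewrite hessE //; exact (qfun_gradE (trmx_hess_slice c) DE PH xR gP).
have ASr r : A *m S r = S r *m A^T.
  have eR : real_vec (delta_mx r 0 : 'cV[C]_6) by move=> k; rewrite mxE realn.
  by have := AhessH _ eR; rewrite hessE // sum_delta_mx_scale.
have BS r : B *m S r = S r *m B^T by rewrite trmx_Bmat; apply: Bmat_intertwine.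
have lam_eigen j : eigenvalue A (lam j).
  rewrite eigenvalue_root_char charA /root horner_prod (bigD1 j) //=.
  by rewrite horner_exp hornerXsubC subrr expr0n mul0r.
have BB : B *m B = 1%:M.
  apply: sqr_Bmat AH lam_inj lam_eigen _ => j.
  by rewrite BE; case: eqP; rewrite ?sqrrN expr1n.
rewrite (gradE _ _ (skew_hamiltonian1 C) (fun k => eq_has_partial (qfun1 df0) (gpP x xR k))).
rewrite (gradE _ _ (skew_hamiltonian_Bmat (al i) (be i) (ga i) AH) (gqP i x xR)) -scalemxAr.
by rewrite (mulmx_trace_col _ (hess_sliceC c) BS) !mulmxA -trmx_mul BB.
Qed.
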